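(* Let $A$ be a circular $m\times n$ matrix, $\alpha$ a positive integer and $x^*\in Q(A,\alpha\mathbf{1})$. Then for every $i\in[m]$, in $D(A,x^* )$ (with $b=\alpha\mathbf{1}$): (i) $c^+_i(x^* )-c^+(P_i^+,x^* )=-\mu\alpha$, where $c^+(P_i^+,x^* )=\sum_{j=\ell_i}^{\ell_i+k_i-1}c^+_{m+j}(x^* )$ is the cost of the path $P_i^+$ of forward short arcs from $\ell_i-1$ to $\ell_i+k_i-1$; (ii) $c^-_i(x^* )-c^-(P_i^-,x^* )=-(1-\mu)\alpha$, where $c^-(P_i^-,x^* )=\sum_{j=\ell_i}^{\ell_i+k_i-1}c^-_{m+j}(x^* )$ is the cost of the path $P_i^-$ of reverse short arcs from $\ell_i+k_i-1$ to $\ell_i-1$. (Column indices $j$ are taken modulo $n$ in $[n]$.)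
   Context: Notation: $[n]=\{1,\dots,n\}$ with addition mod $n$ (index $0$ identified with $n$); for $a,c\in[n]$ with $t\ge0$ minimal such that $a+t\equiv c\pmod n$, $[a,c)_n=\{a,\dots,a+t-1\}$ (mod $n$). An $m\times n$ $\{0,1\}$-matrix $A$ is circular if for each row $i$ there are $\ell_i\in[n]$ and an integer $2\le k_i\le n-1$ with row $i$ the incidence vector of $[\ell_i,\ell_i+k_i)_n$. $Q(A,b)=\{x\ge0:Ax\ge b\}$. $D(A)$: node set $[n]$ (labels mod $n$); forward arcs $a_i=(\ell_i-1,\ell_i+k_i-1)$ ($i\in[m]$) and $a_{m+j}=(j-1,j)$ ($j\in[n]$); reverse arcs $\bar a_i=(\ell_i+k_i-1,\ell_i-1)$ and $\bar a_{m+j}=(j,j-1)$. Costs: $\tilde A=\binom{A}{I}$ ($I$ the $n\times n$ identity), $d=\binom{b}{0}$, $v$ = last column of $\tilde A$; for $x^*\in Q(A,b)$: $s^*=\tilde Ax^*-d$, $\mu=\lceil\mathbf{1}^Tx^*\rceil-\mathbf{1}^Tx^*$, $c^+(x^* )=\mu(s^*-(1-\mu)v)$, $c^-(x^* )=(1-\mu)(s^*+\mu v)$. In $D(A,x^* )$ arc $a_k$ ($k\in[m+n]$) has cost $c^+_k(x^* )$ and arc $\bar a_k$ has cost $c^-_k(x^* )$; the cost of a path is the sum of its arc costs. *)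

From HB Require Import structures.
From mathcomp Require Import all_boot all_order all_algebra.
From mathcomp Require Import reals.
Set Implicit Arguments. Unset Strict Implicit. Unset Printing Implicit Defensive.
Import Order.TTheory GRing.Theory Num.Theory.
Local Open Scope ring_scope.

(* Conventions: column label c in [n] = {1..n} is represented by the ordinal
   c-1 : 'I_n.  In 'I_(m+n), the index
   k in [m+n] (arc a_k) is (lshift n i) for k = i+1 <= m and (rshift m j) for
   k = m + (j+1). *)

Lemma ord_pos (n : nat) (j : 'I_n) : (0 < n)%N.
Proof. by case: j => j /= /(leq_ltn_trans (leq0n j)). Qed.

Definition addmod (n : nat) (j : 'I_n) (t : nat) : 'I_n :=
  Ordinal (ltn_pmod (j + t) (ord_pos j)).

(* A is circular with row i the incidence vector of [l_i, l_i + k_i)_n, where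
   l_i = (ell i) + 1, i.e. ell i is the ordinal of column label l_i. *)
Definition circular_wrt (R : numDomainType) (m n : nat) (A : 'M[R]_(m, n))
  (ell : 'I_m -> 'I_n) (k : 'I_m -> nat) : Prop :=
  forall i : 'I_m,
    [/\ (2 <= k i)%N, (k i <= n - 1)%N &
        forall j : 'I_n,
          A i j = if [exists t : 'I_(k i), addmod (ell i) t == j] then 1 else 0].

Definition inQ (R : numDomainType) (m n : nat) (A : 'M[R]_(m, n))
  (b : 'cV[R]_m) (x : 'cV[R]_n) : Prop :=
  (forall j, 0 <= x j 0) /\ (forall i, b i 0 <= (A *m x) i 0).

Section Costs.
Variables (R : realType) (m n : nat) (A : 'M[R]_(m, n)) (b : 'cV[R]_m).

Definition Atil : 'M[R]_(m + n, n) := col_mx A 1%:M.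
Definition dvec : 'cV[R]_(m + n) := col_mx b 0.
Definition vlast : 'cV[R]_(m + n) :=
  \col_r (match [pick j : 'I_n | (j.+1 == n)%N] with
          | Some j => Atil r j | None => 0 end).

Definition svec (x : 'cV[R]_n) : 'cV[R]_(m + n) := Atil *m x - dvec.
Definition sumx (x : 'cV[R]_n) : R := \sum_(j < n) x j 0.
Definition mu (x : 'cV[R]_n) : R := (Num.ceil (sumx x))%:~R - sumx x.

Definition cplus (x : 'cV[R]_n) : 'cV[R]_(m + n) :=
  mu x *: (svec x - (1 - mu x) *: vlast).
Definition cminus (x : 'cV[R]_n) : 'cV[R]_(m + n) :=
  (1 - mu x) *: (svec x + mu x *: vlast).
End Costs.

From HB Require Import structures.
From mathcomp Require Import all_boot all_order all_algebra.
From mathcomp Require Import reals ring.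
Set Implicit Arguments. Unset Strict Implicit. Unset Printing Implicit Defensive.
Import Order.TTheory GRing.Theory Num.Theory.
Local Open Scope ring_scope.

(* Row i of a circular matrix is the indicator of the window
   [ell i, ell i + k i) of columns, so its slack s_i is the sum of the slacks
   x_j of the short arcs spanned by a_i, minus b_i, and its entry v_i in the
   last column counts how many of those short arcs hit column n.  Hence the
   cost of a_i and the cost of its path of short arcs differ only by the term
   -mu b_i (resp. -(1 - mu) b_i) contributed by the right-hand side. *)

Lemma addmod_inj (n : nat) (e : 'I_n) (k : nat) : (k <= n)%N ->
  injective (fun t : 'I_k => addmod e t).
Proof.
move=> le_kn t1 t2 /(congr1 val) /= /eqP; rewrite eqn_modDl => /eqP.
by rewrite !modn_small ?(leq_trans (ltn_ord _) le_kn) // => /val_inj.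
Qed.

Section CircularRow.
Variables (R : numDomainType) (m n : nat) (A : 'M[R]_(m, n)).
Variables (ell : 'I_m -> 'I_n) (k : 'I_m -> nat).
Hypothesis circA : circular_wrt A ell k.

Lemma circular_row_sum (i : 'I_m) (g : 'I_n -> R) :
  \sum_(j < n) A i j * g j = \sum_(t < k i) g (addmod (ell i) t).
Proof.
have [_ le_kn1 Aij] := circA i.
have le_kn : (k i <= n)%N by rewrite (leq_trans le_kn1) ?leq_subr.
rewrite -(big_imset _ (in2W (addmod_inj (e := ell i) le_kn))) [RHS]big_mkcond /=.
apply: eq_bigr => j _; rewrite Aij.
have [[t /eqP <-]|no_t] := altP existsP; first by rewrite mul1r imset_f.
rewrite mul0r; case: imsetP => // -[t _ jE].
by case/negP: no_t; apply/existsP; exists t; rewrite jE.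
Qed.

Lemma circular_mulmx (i : 'I_m) (y : 'cV[R]_n) :
  (A *m y) i 0 = \sum_(t < k i) y (addmod (ell i) t) 0.
Proof. by rewrite mxE circular_row_sum. Qed.

Lemma circular_entry (i : 'I_m) (j0 : 'I_n) :
  A i j0 = \sum_(t < k i) (addmod (ell i) t == j0)%:R.
Proof.
rewrite -(circular_row_sum i (fun j => (j == j0)%:R)) (bigD1 j0) //=.
by rewrite eqxx mulr1 big1 ?addr0 // => j /negbTE ->; rewrite mulr0.
Qed.

End CircularRow.

Section Costs.
Variables (R : realType) (m n : nat) (A : 'M[R]_(m, n.+1)) (b : 'cV[R]_m).
Variable x : 'cV[R]_n.+1.

Lemma svec_lshift (i : 'I_m) :
  svec A b x (lshift n.+1 i) 0 = (A *m x) i 0 - b i 0.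
Proof.
by rewrite /svec /Atil /dvec mul_col_mx !mxE -[lshift _ i]/(unsplit (inl i))
  unsplitK mxE.
Qed.

Lemma svec_rshift (j : 'I_n.+1) : svec A b x (rshift m j) 0 = x j 0.
Proof.
by rewrite /svec /Atil /dvec mul_col_mx mul1mx !mxE
  -[rshift m j]/(unsplit (inr j)) unsplitK mxE subr0.
Qed.

Lemma vlastE (r : 'I_(m + n.+1)) : vlast A r 0 = Atil A r ord_max.
Proof.
rewrite /vlast mxE; case: pickP => [j /eqP [jE]|/(_ ord_max)]; last first.
  by rewrite /= eqxx.
by congr (Atil A r _); apply: val_inj.
Qed.

Lemma vlast_lshift (i : 'I_m) : vlast A (lshift n.+1 i) 0 = A i ord_max.
Proof. by rewrite vlastE /Atil mxE -[lshift _ i]/(unsplit (inl i)) unsplitK. Qed.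

Lemma vlast_rshift (j : 'I_n.+1) :
  vlast A (rshift m j) 0 = (j == ord_max)%:R.
Proof.
by rewrite vlastE /Atil mxE -[rshift m j]/(unsplit (inr j)) unsplitK mxE.
Qed.

Lemma cplus_lshift (i : 'I_m) : cplus A b x (lshift n.+1 i) 0 =
  mu x * ((A *m x) i 0 - b i 0 - (1 - mu x) * A i ord_max).
Proof. by rewrite -svec_lshift -vlast_lshift !mxE. Qed.

Lemma cplus_rshift (j : 'I_n.+1) : cplus A b x (rshift m j) 0 =
  mu x * (x j 0 - (1 - mu x) * (j == ord_max)%:R).
Proof. by rewrite -svec_rshift -vlast_rshift !mxE. Qed.

Lemma cminus_lshift (i : 'I_m) : cminus A b x (lshift n.+1 i) 0 =
  (1 - mu x) * ((A *m x) i 0 - b i 0 + mu x * A i ord_max).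
Proof. by rewrite -svec_lshift -vlast_lshift !mxE. Qed.

Lemma cminus_rshift (j : 'I_n.+1) : cminus A b x (rshift m j) 0 =
  (1 - mu x) * (x j 0 + mu x * (j == ord_max)%:R).
Proof. by rewrite -svec_rshift -vlast_rshift !mxE. Qed.

Variables (ell : 'I_m -> 'I_n.+1) (k : 'I_m -> nat).
Hypothesis circA : circular_wrt A ell k.

Lemma circular_cplus_gap (i : 'I_m) :
  cplus A b x (lshift n.+1 i) 0
    - \sum_(t < k i) cplus A b x (rshift m (addmod (ell i) t)) 0
  = - (mu x * b i 0).
Proof.
under eq_bigr do rewrite cplus_rshift.
rewrite cplus_lshift (circular_mulmx circA) (circular_entry circA i ord_max).
rewrite -mulr_sumr sumrB -mulr_sumr; ring.
Qed.

Lemma circular_cminus_gap (i : 'I_m) :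
  cminus A b x (lshift n.+1 i) 0
    - \sum_(t < k i) cminus A b x (rshift m (addmod (ell i) t)) 0
  = - ((1 - mu x) * b i 0).
Proof.
under eq_bigr do rewrite cminus_rshift.
rewrite cminus_lshift (circular_mulmx circA) (circular_entry circA i ord_max).
rewrite -mulr_sumr big_split -mulr_sumr /=; ring.
Qed.

End Costs.

(* The identity holds for every right-hand side b. *)
Theorem lemma5p1 (R : realType) (m n : nat) (A : 'M[R]_(m, n))
  (ell : 'I_m -> 'I_n) (k : 'I_m -> nat) (alpha : nat) (x : 'cV[R]_n) :
  circular_wrt A ell k -> (0 < alpha)%N ->
  inQ A (const_mx alpha%:R) x ->
  forall i : 'I_m,
    cplus A (const_mx alpha%:R) x (lshift n i) 0
      - \sum_(t < k i) cplus A (const_mx alpha%:R) x (rshift m (addmod (ell i) t)) 0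
      = - (mu x * alpha%:R)
    /\
    cminus A (const_mx alpha%:R) x (lshift n i) 0
      - \sum_(t < k i) cminus A (const_mx alpha%:R) x (rshift m (addmod (ell i) t)) 0
      = - ((1 - mu x) * alpha%:R).
Proof.
case: n A ell x => [|n] A ell x circA _ _ i; first by case: (ell i).
by rewrite (circular_cplus_gap _ _ circA) (circular_cminus_gap _ _ circA) mxE.
Qed.
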